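(* Let $\mathcal{G}$ be any grouped weight partition of $\mathbb{F}_q^k$ and $t$ a positive integer. Then $$r_{\mathcal{G}}(k,t)=N\big(\mathcal{D}_{\mathcal{G}}(t;u_0,u_1,\ldots,u_k)\big),\qquad u_i=(\underbrace{1,\ldots,1}_{i},0,\ldots,0),\ i=0,\ldots,k.$$
   Context: Let $W_i=\{u\in\mathbb{F}_q^k:\mathrm{wt}(u)=i\}$ (Hamming weight). A grouped weight partition is a partition $\mathcal{G}=\{G_1,\ldots,G_m\}$ of $\mathbb{F}_q^k$ with $G_j=\bigcup_{i\in S_j}W_i$, where $S_1,\ldots,S_m$ form a partition of $\{0,\ldots,k\}$. A $(\mathcal{P},t)$-encoding with redundancy $r$ is a systematic map $\mathcal{C}:\mathbb{F}_q^k\to\mathbb{F}_q^{k+r}$, $\mathcal{C}(u)=(u,p(u))$, with Hamming distance $d(\mathcal{C}(u),\mathcal{C}(v))\ge 2t+1$ whenever $u,v$ lie in different blocks; $r_{\mathcal{P}}(k,t)$ is the minimum such $r$. For distinct $u_1,\ldots,u_M$, $\mathcal{D}_{\mathcal{P}}(t;u_1,\ldots,u_M)$ is the $M\times M$ matrix with $(i,j)$ entry $\max(2t+1-d(u_i,u_j),0)$ if $u_i,u_j$ lie in different blocks of $\mathcal{P}$ and $0$ otherwise. For $D\in\mathbb{N}^{M\times M}$, $N(D)$ is the smallest $r\ge0$ such that there exist $z_1,\ldots,z_M\in\mathbb{F}_q^r$ with $d(z_i,z_j)\ge D_{i,j}$ for all $i\ne j$. *)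

From mathcomp Require Import all_boot all_order all_algebra all_field.
Set Implicit Arguments. Unset Strict Implicit. Unset Printing Implicit Defensive.
Import GRing.Theory.
Local Open Scope ring_scope.

Section Defs.
Variable F : finFieldType.

Definition hdist n (u v : 'rV[F]_n) : nat := #|[set j : 'I_n | u 0 j != v 0 j]|.
Definition hwt n (u : 'rV[F]_n) : nat := #|[set j : 'I_n | u 0 j != 0]|.

(* A partition P of F^k is represented by a block-label function blk:
   u, v lie in the same block iff blk u = blk v. *)

Definition has_encoding k (blk : 'rV[F]_k -> nat) (t r : nat) : Prop :=
  exists p : 'rV[F]_k -> 'rV[F]_r,
    forall u v, blk u != blk v ->
      (2 * t + 1 <= hdist (row_mx u (p u)) (row_mx v (p v)))%N.

Definition Dmat k (blk : 'rV[F]_k -> nat) (t M : nat) (us : 'I_M -> 'rV[F]_k)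
  : 'M[nat]_M :=
  \matrix_(i, j) (if blk (us i) != blk (us j)
                  then (2 * t + 1 - hdist (us i) (us j))%N else 0%N).

Definition realizable M (D : 'M[nat]_M) (r : nat) : Prop :=
  exists z : 'I_M -> 'rV[F]_r,
    forall i j, i != j -> (D i j <= hdist (z i) (z j))%N.

End Defs.

Definition is_min (P : nat -> Prop) (n : nat) : Prop :=
  P n /\ forall m, P m -> (n <= m)%N.

(* grouped weight partition: block of u determined by the weight of u via
   a labelling c of {0,...,k} (the fibres of c on {0..k} are the S_j) *)
Definition grouped (F : finFieldType) k (c : nat -> nat) : 'rV[F]_k -> nat :=
  fun u => c (hwt u).

Definition ustep (F : finFieldType) k (i : 'I_k.+1) : 'rV[F]_k :=
  \row_(j < k) (if (j < i)%N then 1 else 0).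

From mathcomp Require Import all_boot all_order all_algebra all_field zify.
From Stdlib Require Import Classical.
Import GRing.Theory.
Set Implicit Arguments. Unset Strict Implicit. Unset Printing Implicit Defensive.

(* The distance between u_a and u_b is |a - b|, and |wt u - wt v| <= d(u, v)
   for all u, v.  Hence the restriction of an encoding to u_0, ..., u_k is a
   realization of D, and conversely a realization z_0, ..., z_k of D yields
   the encoding u |-> (u, z_(wt u)): for u, v in different blocks,
   d(u, v) + d(z_(wt u), z_(wt v)) >= |wt u - wt v| + (2t + 1 - |wt u - wt v|).
   So both problems have the same feasible redundancies, and a feasible one
   exists by repetition of the identity code. *)

Lemma is_min_ext (P Q : nat -> Prop) n :
  (forall m, P m <-> Q m) -> is_min P n <-> is_min Q n.
Proof.
move=> PQ; split=> -[Xn minX]; split=> [|m Xm].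
- by rewrite -PQ.
- by apply: minX; rewrite PQ.
- by rewrite PQ.
- by apply: minX; rewrite -PQ.
Qed.

Lemma ex_is_min (P : nat -> Prop) n : P n -> exists m, is_min P m.
Proof.
elim: n {-2}n (leqnn n) => [|N IH] n le_nN Pn.
  by exists n; split=> // m _; move: le_nN; rewrite leqn0 => /eqP ->.
have [[m [lt_mn Pm]] | no_smaller] := classic (exists m, (m < n)%N /\ P m).
  by apply: (IH m) => //; rewrite -ltnS (leq_trans lt_mn).
exists n; split=> // m Pm; rewrite leqNgt; apply/negP => lt_mn.
by apply: no_smaller; exists m.
Qed.

Lemma sum_nat_range k a b : (a <= b <= k)%N ->
  (\sum_(j < k) ((a <= j) && (j < b) : nat))%N = (b - a)%N.
Proof.
case/andP => le_ab le_bk.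
rewrite -(big_mkord xpredT (fun j => ((a <= j) && (j < b) : nat))).
rewrite (@big_cat_nat _ _ _ a) ?(leq_trans le_ab) //= (@big_cat_nat _ _ _ b a) //=.
rewrite big_nat_cond big1 ?add0n => [|i /andP[/andP[_ lt_ia] _]]; last first.
  by rewrite leqNgt lt_ia.
rewrite addnC big_nat_cond big1 ?add0n => [|i /andP[/andP[le_bi _] _]]; last first.
  by rewrite ltnNge le_bi andbF.
rewrite (@eq_big_nat _ _ _ a b _ (fun _ => 1%N)) ?sum_nat_const_nat ?muln1 //.
by move=> i /andP[-> ->].
Qed.

Section HammingGeometry.
Variable F : finFieldType.

Lemma card_set_sum (T : finType) (P : pred T) :
  #|[set x | P x]| = (\sum_(x : T) (P x : nat))%N.
Proof. by rewrite -sum1_card big_mkcond; apply: eq_bigr => x _; rewrite inE; case: (P x). Qed.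

Lemma hdistE n (u v : 'rV[F]_n) :
  hdist u v = (\sum_(j < n) (u ord0 j != v ord0 j : nat))%N.
Proof. exact: card_set_sum. Qed.

Lemma hwtE n (u : 'rV[F]_n) : hwt u = (\sum_(j < n) (u ord0 j != 0%R : nat))%N.
Proof. exact: card_set_sum. Qed.

Lemma hdistC n (u v : 'rV[F]_n) : hdist u v = hdist v u.
Proof. by rewrite !hdistE; apply: eq_bigr => j _; rewrite eq_sym. Qed.

Lemma hdist_gt0 n (u v : 'rV[F]_n) : u != v -> (0 < hdist u v)%N.
Proof.
move=> neq_uv; have [j neq_j] : exists j, u ord0 j != v ord0 j.
  apply/existsP; apply: contraR neq_uv; rewrite negb_exists => /forallP eq_uv.
  by apply/eqP/rowP => j; have /negPn/eqP := eq_uv j; rewrite [ord0]ord1.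
by rewrite hdistE (bigD1 j) //= neq_j.
Qed.

Lemma hdist_row_mx m n (u v : 'rV[F]_m) (p q : 'rV[F]_n) :
  hdist (row_mx u p) (row_mx v q) = (hdist u v + hdist p q)%N.
Proof.
rewrite !hdistE big_split_ord /=.
by congr (_ + _)%N; apply: eq_bigr => j _; rewrite ?row_mxEl ?row_mxEr.
Qed.

Lemma hwt_le n (u : 'rV[F]_n) : (hwt u <= n)%N.
Proof. by rewrite /hwt -[X in (_ <= X)%N]card_ord max_card. Qed.

Lemma hwt_le_hdist n (u v : 'rV[F]_n) : (hwt u <= hwt v + hdist u v)%N.
Proof.
rewrite !hwtE hdistE -big_split /=; apply: leq_sum => j _.
by case: eqP => [->|]; case: eqP => [->|] //=; case: eqP.
Qed.

Lemma distn_hwt_le_hdist n (u v : 'rV[F]_n) :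
  (hwt u - hwt v + (hwt v - hwt u) <= hdist u v)%N.
Proof. have := hwt_le_hdist u v; have := hwt_le_hdist v u; rewrite hdistC; lia. Qed.

Lemma hwt_ustep k (a : 'I_k.+1) : hwt (ustep F a) = a.
Proof.
rewrite hwtE -[RHS]subn0 -(@sum_nat_range k 0 a); last by rewrite /= -ltnS.
by apply: eq_bigr => j _; rewrite mxE; case: ifP; rewrite ?oner_eq0 ?eqxx.
Qed.

Lemma hdist_ustep k (a b : 'I_k.+1) :
  hdist (ustep F a) (ustep F b) = (a - b + (b - a))%N.
Proof.
wlog le_ab : a b / (a <= b)%N.
  move=> hwlog; have [/hwlog //|/ltnW/hwlog] := leqP a b.
  by rewrite hdistC addnC.
rewrite (eqP le_ab) add0n -(@sum_nat_range k a b); last by rewrite le_ab /= -ltnS.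
rewrite hdistE; apply: eq_bigr => j _; rewrite !mxE.
case: (ltnP j a) => [lt_ja|le_aj]; case: (ltnP j b) => [lt_jb|le_bj] /=;
  rewrite ?eqxx ?oner_eq0 1?eq_sym ?oner_eq0 //.
by have := leq_trans lt_ja (leq_trans le_ab le_bj); rewrite ltnn.
Qed.

Lemma repetition_code k m : exists r (p : 'rV[F]_k -> 'rV[F]_r),
  forall u v, u != v -> (m <= hdist (p u) (p v))%N.
Proof.
elim: m => [|m [r [p dist_p]]]; first by exists 0%N, (fun _ => 0%R).
exists (k + r)%N, (fun u => row_mx u (p u)) => u v neq_uv.
by rewrite hdist_row_mx -add1n leq_add ?hdist_gt0 ?dist_p.
Qed.

Lemma has_encoding_exists k (blk : 'rV[F]_k -> nat) t :
  exists r, has_encoding blk t r.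
Proof.
have [r [p dist_p]] := repetition_code k (2 * t + 1).
exists r, p => u v neq_blk; rewrite hdist_row_mx.
by rewrite (leq_trans _ (leq_addl _ _)) // dist_p //; apply: contra neq_blk => /eqP ->.
Qed.

Lemma has_encoding_grouped k c t r :
  has_encoding (@grouped F k c) t r <->
  realizable F (Dmat (@grouped F k c) t (@ustep F k)) r.
Proof.
split=> [[p enc_p] | [z real_z]].
  exists (fun i => p (ustep F i)) => i j _; rewrite mxE.
  by case: ifP => // /enc_p; rewrite hdist_row_mx leq_subLR.
pose i_ (u : 'rV[F]_k) : 'I_k.+1 := inord (hwt u).
have i_E u : i_ u = hwt u :> nat by rewrite inordK // ltnS hwt_le.
have hwt_i u : hwt (ustep F (i_ u)) = hwt u by rewrite hwt_ustep i_E.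
exists (fun u => z (i_ u)) => u v neq_blk.
have neq_i : i_ u != i_ v.
  by apply: contra neq_blk => /eqP eq_i; rewrite /grouped -hwt_i eq_i hwt_i.
have := real_z _ _ neq_i; rewrite mxE /grouped !hwt_i.
rewrite [_ != _]neq_blk.
rewrite hdist_ustep !i_E leq_subLR hdist_row_mx => /leq_trans; apply.
by rewrite leq_add2r distn_hwt_le_hdist.
Qed.

End HammingGeometry.

Theorem corollary9 (F : finFieldType) (k : nat) (c : nat -> nat) (t : nat)
  (ht : (0 < t)%N) :
  let G := @grouped F k c in
  (exists r, is_min (has_encoding G t) r) /\
  (forall r, is_min (has_encoding G t) r <->
             is_min (realizable F (Dmat G t (@ustep F k))) r).
Proof.
move=> G; split.
  by have [r enc_r] := has_encoding_exists G t; exact: ex_is_min enc_r.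
by move=> r; apply: is_min_ext => m; exact: has_encoding_grouped.
Qed.
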